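(* Let $X$ be any quasi-compact Noetherian topological space and $f\colon X\to X$ any continuous map. Then for any finite open cover $\mathfrak U$ of $X$ and any $\epsilon>0$ there is $C>0$ such that \[ N(\mathfrak U_n)\le C(1+\epsilon)^n\quad\text{for all } n, \] where $\mathfrak U_n=\mathfrak U\vee f^{-1}\mathfrak U\vee\dots\vee f^{-(n-1)}\mathfrak U$. In particular $h_{\mathrm{top}}(f)=0$.
   Context: A topological space is Noetherian if every decreasing sequence of closed subsets is eventually stationary. For finite covers $\mathfrak U=\{U_i\},\mathfrak V=\{V_j\}$, $\mathfrak U\vee\mathfrak V=\{U_i\cap V_j\}$, and $N(\mathfrak U)$ is the minimal number of members of $\mathfrak U$ needed to cover $X$. $h_{\mathrm{top}}(f)=\sup_{\mathfrak U}\lim_n\frac1n\log N(\mathfrak U_n)$ over finite open covers. *)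

From HB Require Import structures.
From mathcomp Require Import all_boot all_order all_algebra.
From mathcomp Require Import all_classical all_reals all_analysis.
Set Implicit Arguments. Unset Strict Implicit. Unset Printing Implicit Defensive.
Import Order.TTheory GRing.Theory Num.Theory.
Local Open Scope classical_set_scope.
Local Open Scope ring_scope.

Definition noetherian (X : topologicalType) : Prop :=
  forall F : nat -> set X, (forall n, closed (F n)) ->
    (forall n, F n.+1 `<=` F n) ->
    exists m, forall n, (m <= n)%N -> F n = F m.

Definition quasi_compact (X : topologicalType) : Prop := compact [set: X].

Definition is_cover (X : Type) (U : seq (set X)) : Prop :=
  \bigcup_(i in [set i | (i < size U)%N]) nth set0 U i = [set: X].

Definition finite_open_cover (X : topologicalType) (U : seq (set X)) : Prop :=
  (forall i, (i < size U)%N -> open (nth set0 U i)) /\ is_cover U.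

Definition cover_join (X : Type) (U V : seq (set X)) : seq (set X) :=
  [seq A `&` B | A <- U, B <- V].

Definition cover_preimage (X : Type) (g : X -> X) (U : seq (set X)) : seq (set X) :=
  [seq g @^-1` A | A <- U].

Definition cover_n (X : Type) (f : X -> X) (U : seq (set X)) (n : nat) : seq (set X) :=
  foldr (@cover_join X) [:: [set: X]]
        [seq cover_preimage (iter k f) U | k <- iota 0 n].

Definition Ncov (X : Type) (U : seq (set X)) : nat :=
  \big[minn/size U]_(I : {set 'I_(size U)} |
      `[< \bigcup_(i in [set i | i \in I]) nth set0 U i = [set: X] >]) #|I|.

Definition htop (R : realType) (X : topologicalType) (f : X -> X) : \bar R :=
  ereal_sup [set (limn (fun n : nat =>
                   ((ln (Ncov (cover_n f U n))%:R : R) / n%:R)%:E))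
            | U in [set U | finite_open_cover U]].

(* Code a point x by its itinerary k |-> {i | f^k x \in U_i}, a sequence over a
   finite alphabet. A member of U_n containing x can be read off the length-n
   prefix of its itinerary, so N(U_n) is at most the number p(n) of length-n
   words of the closure of all itineraries, a closed shift-invariant set of
   sequences.

   Noetherianity makes this closure scattered: the points whose itineraries
   share a prefix form a locally closed set, the closures of these cylinders
   along an itinerary stabilize, and an itinerary whose stable closure is
   minimal is isolated, because two locally closed sets with the same closure
   meet.

   A closed shift-invariant scattered set P has subexponential complexity. If
   p(n) >= b^n for all n, with b > 1, Zorn's lemma gives a minimal closed
   invariant Q in P with the same growth. The points of Q whose m-prefix is not
   a word of its Cantor-Bendixson derivative Q' are isolated in Q, hence by
   compactness determined by a prefix of fixed length, so
   p_Q(m + c) <= p_Q'(m) p_Q(c) + M; this forces Q' to keep the growth, so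
   Q' = Q by minimality, against scatteredness. Finally p is submultiplicative,
   so one n0 with p(n0) < b^n0 already gives p(n) <= C b^n. *)

From HB Require Import structures.
From mathcomp Require Import all_boot all_order all_algebra.
From mathcomp Require Import all_classical all_reals all_analysis.
From mathcomp Require Import ring lra.
Set Implicit Arguments. Unset Strict Implicit. Unset Printing Implicit Defensive.
Import Order.TTheory GRing.Theory Num.Theory numFieldNormedType.Exports.
Local Open Scope classical_set_scope.

Lemma total_on_finite_min (T : Type) (I : finType) (F : set (set T)) (g : I -> set T) :
  total_on F subset -> (forall i, F (g i)) -> I -> exists i, forall j, g i `<=` g j.
Proof.
move=> Ftot Fg i0.
suff [i ih] : exists i, forall j, j \in enum I -> g i `<=` g j.
  by exists i => j; apply: ih; rewrite mem_enum.
elim: (enum I) => [|j s [i ih]]; first by exists i0.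
have [ij|ji] := Ftot _ _ (Fg i) (Fg j).
  by exists i => k; rewrite inE => /orP[/eqP ->//|]; exact: ih.
exists j => k; rewrite inE => /orP[/eqP ->//|ks]; exact: subset_trans ji (ih _ ks).
Qed.

Lemma recursion_bound (p : nat -> nat) r M m :
  (forall c, p (m + c) <= r * p c + M)%N ->
  forall j, (p (j * m) <= (M + p 0) * j.+1 * maxn r 1 ^ j)%N.
Proof.
move=> h; elim=> [|j IH]; first by rewrite mul0n expn0 !muln1 leq_addl.
rewrite mulSn; apply: leq_trans (h _) _.
set K := (M + p 0)%N; have r1_gt0 : (0 < maxn r 1)%N by rewrite leq_max orbT.
set r1 := maxn r 1.
apply: (@leq_trans (r1 * (K * j.+1 * r1 ^ j) + K)%N).
  by apply: leq_add; [apply: leq_mul; rewrite ?leq_maxl | exact: leq_addr].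
have -> : (r1 * (K * j.+1 * r1 ^ j) = K * j.+1 * r1 ^ j.+1)%N by rewrite expnS; ring.
rewrite [(K * j.+2)%N]mulnS mulnDl addnC leq_add2r.
by rewrite leq_pmulr // expn_gt0 r1_gt0.
Qed.

Section RealBounds.
Variable R : realType.
Local Open Scope ring_scope.

Lemma bernoulli_ineq (d : R) n : 0 <= d -> 1 + n%:R * d <= (1 + d) ^+ n.
Proof.
move=> d0; elim: n => [|n IH]; first by rewrite mul0r addr0 expr0.
rewrite exprS; apply: le_trans (ler_wpM2l _ IH); last by rewrite addr_ge0.
have n0 : 0 <= n%:R :> R by [].
rewrite -natr1 mulrDl mul1r; nra.
Qed.

Lemma geometric_beats_linear (rho K : R) : 1 < rho -> 0 <= K ->
  exists j : nat, K * j.+1%:R < rho ^+ j.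
Proof.
move=> rho1 K0; set d := rho - 1; have d0 : 0 < d by rewrite subr_gt0.
pose i := (Num.Def.archi_bound (3 * K / (d * d))).+1.
have i1 : 1 <= i%:R :> R by rewrite ler1n.
have hi : 3 * K < i%:R * (d * d).
  rewrite -ltr_pdivrMr ?mulr_gt0 //; apply: lt_le_trans (archi_boundP _) _.
    by rewrite divr_ge0 ?mulr_ge0 // ltW.
  by rewrite ler_nat.
exists (i + i)%N; rewrite exprD -natr1 natrD.
have bern : 1 + i%:R * d <= rho ^+ i.
  have <- : 1 + d = rho by rewrite /d addrC subrK.
  exact/bernoulli_ineq/ltW.
have id0 : 0 <= i%:R * d by rewrite mulr_ge0 // ltW.
apply: lt_le_trans (ler_pM _ _ bern bern); rewrite ?addr_ge0 //.
have : 3 * K * i%:R < i%:R * (i%:R * (d * d)).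
  by rewrite mulrC ltr_pM2l // (lt_le_trans ltr01 i1).
nra.
Qed.

Lemma recursion_below_geometric (b : R) (p : nat -> nat) r M m :
  1 < b -> (0 < m)%N -> r%:R < b ^+ m -> (forall c, p (m + c) <= r * p c + M)%N ->
  exists n, (p n)%:R < b ^+ n.
Proof.
move=> b1 m_gt0 rb rec; pose B := b ^+ m; pose r1 := maxn r 1.
have B1 : 1 < B by rewrite /B exprn_egt1 // -lt0n.
have r1_gt0 : (0 < r1)%N by rewrite leq_max orbT.
have r1B : r1%:R < B by rewrite /r1 /maxn; case: ifP.
have rho1 : 1 < B / r1%:R by rewrite ltr_pdivlMr ?ltr0n // mul1r.
have [j hj] := geometric_beats_linear rho1 (ler0n _ (M + p 0)).
exists (j * m)%N; rewrite mulnC exprM -/B.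
apply: le_lt_trans (_ : ((M + p 0) * j.+1 * r1 ^ j)%:R < B ^+ j).
  by rewrite ler_nat mulnC; exact: recursion_bound.
by rewrite !natrM natrX -ltr_pdivlMr ?exprn_gt0 ?ltr0n // -expr_div_n.
Qed.
End RealBounds.

Section Subshifts.
Variable A : finType.
Local Notation AN := (nat -> A).

Definition agree n (u v : AN) := forall k, (k < n)%N -> u k = v k.
Definition shift (u : AN) : AN := fun k => u k.+1.
Definition shiftn a (u : AN) : AN := fun k => u (a + k)%N.

Definition seq_closed (P : set AN) :=
  forall u, (forall n, exists v, P v /\ agree n u v) -> P u.
Definition shift_invariant (P : set AN) := forall u, P u -> P (shift u).

Definition prefix n (u : AN) : {ffun 'I_n -> A} := [ffun i : 'I_n => u i].
Definition language n (P : set AN) : {set {ffun 'I_n -> A}} :=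
  [set w | `[< exists u, P u /\ prefix n u = w >]].
Definition complexity (P : set AN) n := #|language n P|.

Definition isolated (P : set AN) u := exists n, forall v, P v -> agree n u v -> v = u.
Definition derived (P : set AN) : set AN := [set u | P u /\ ~ isolated P u].
Definition scattered (P : set AN) :=
  forall Q, Q `<=` P -> Q !=set0 -> exists u, Q u /\ isolated Q u.

Lemma agree_sym n u v : agree n u v -> agree n v u.
Proof. by move=> h k kn; rewrite h. Qed.

Lemma agree_trans n u v w : agree n u v -> agree n v w -> agree n u w.
Proof. by move=> h1 h2 k kn; rewrite h1 // h2. Qed.

Lemma agree_le n n' u v : (n <= n')%N -> agree n' u v -> agree n u v.
Proof. by move=> le h k kn; apply: h; exact: leq_trans kn le. Qed.

Lemma eq_prefix n u v : prefix n u = prefix n v <-> agree n u v.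
Proof.
split=> [e k kn|h]; last by apply/ffunP => i; rewrite !ffunE h.
by have := congr1 (fun g : {ffun 'I_n -> A} => g (Ordinal kn)) e; rewrite !ffunE.
Qed.

Lemma languageP n P w : reflect (exists u, P u /\ prefix n u = w) (w \in language n P).
Proof. by rewrite inE; exact: asboolP. Qed.

Lemma mem_language n P u : P u -> prefix n u \in language n P.
Proof. by move=> Pu; apply/languageP; exists u. Qed.

Lemma languageS n (P Q : set AN) : P `<=` Q -> language n P \subset language n Q.
Proof.
move=> PQ; apply/fintype.subsetP => w /languageP [u [Pu <-]].
by apply: mem_language; exact: PQ.
Qed.

Lemma complexity0 n : complexity set0 n = 0%N.
Proof.
apply/eqP; rewrite cards_eq0; apply/eqP/setP => w; rewrite finset.in_set0.
by apply/negP => /languageP [u []].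
Qed.

Lemma complexity_gt0 P n : (0 < complexity P n)%N -> P !=set0.
Proof. by move=> /card_gt0P [w /languageP [u [Pu _]]]; exists u. Qed.

Lemma shift_invariant_shiftn P a u : shift_invariant P -> P u -> P (shiftn a u).
Proof.
move=> iP Pu; elim: a => [|a IH].
  by have -> : shiftn 0 u = u by apply: funext => k; rewrite /shiftn add0n.
have -> : shiftn a.+1 u = shift (shiftn a u).
  by apply: funext => k; rewrite /shiftn /shift addnS.
exact: iP.
Qed.

Lemma derived_sub P : derived P `<=` P.
Proof. by move=> u []. Qed.

Lemma seq_closed_derived P : seq_closed P -> seq_closed (derived P).
Proof.
move=> cP u h; split.
  by apply: cP => n; have [v [[Pv _] avu]] := h n; exists v.
move=> [n isn]; have [v [[Pv niv] auv]] := h n.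
apply: niv; exists n => w Pw avw.
by rewrite (isn w Pw (agree_trans auv avw)) (isn v Pv auv).
Qed.

Lemma shift_invariant_derived P : shift_invariant P -> shift_invariant (derived P).
Proof.
move=> iP u [Pu niu]; split; first exact: iP.
move=> [n isn]; apply: niu; exists n.+1 => v Pv auv.
have esh : shift v = shift u by apply: isn (iP _ Pv) _ => k kn; apply: auv.
apply: funext => -[|k]; first by rewrite auv.
by have := congr1 (fun g => g k) esh.
Qed.

Lemma konig (G : nat -> AN -> Prop) n0 u0 :
  (forall j u v, G j u -> agree j u v -> G j v) ->
  (forall j u, G j u -> exists v, agree j u v /\ G j.+1 v) ->
  G n0 u0 -> exists w, agree n0 u0 w /\ forall j, (n0 <= j)%N -> G j w.
Proof.
move=> Gag Gst G0.
pose step j u := if pselect (exists v, agree j u v /\ G j.+1 v) is left H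
  then proj1_sig (cid H) else u.
have stepP j u : G j u -> agree j u (step j u) /\ G j.+1 (step j u).
  move=> Gu; rewrite /step; case: pselect => [H|[]]; last exact: Gst.
  exact: proj2_sig (cid H).
pose s := fix s k := if k is k'.+1 then step (n0 + k')%N (s k') else u0.
have sP k : G (n0 + k)%N (s k) /\ agree (n0 + k)%N (s k) (s k.+1).
  elim: k => [|k [Gk _]].
    by rewrite /= !addn0; split => //; exact: (stepP _ _ G0).1.
  have [_ Gk1] := stepP _ _ Gk; rewrite -addnS in Gk1.
  by split => //; exact: (stepP _ _ Gk1).1.
have s_agree k d : agree (n0 + k)%N (s k) (s (k + d)%N).
  elim: d => [|d IH]; first by rewrite addn0.
  apply: agree_trans IH _; rewrite addnS.
  by apply: agree_le (sP _).2; rewrite leq_add2l leq_addr.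
pose w i := s i.+1 i.
have s_w k : agree (n0 + k)%N (s k) w.
  move=> i ik; rewrite /w; have [le|lt] := leqP k i.+1.
    by have := s_agree k (i.+1 - k)%N; rewrite subnKC //; apply.
  have := s_agree i.+1 (k - i.+1)%N; rewrite subnKC; last exact: ltnW.
  by move=> ->; rewrite // addnC ltn_addr.
exists w; split; first by have := s_w 0%N; rewrite addn0.
by move=> j n0j; rewrite -(subnKC n0j); apply: Gag (s_w _); exact: (sP _).1.
Qed.

Definition set_at (u : AN) j (a : A) : AN := fun k => if k == j then a else u k.

Lemma agree_set_at n u a : agree n u (set_at u n a).
Proof. by move=> k kn; rewrite /set_at (ltn_eqF kn). Qed.

Lemma agreeS_set_at n u v : agree n u v -> agree n.+1 (set_at u n (v n)) v.
Proof.
move=> uv k; rewrite ltnS leq_eqVlt => /orP[/eqP ->|kn]; first by rewrite /set_at eqxx.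
by rewrite /set_at (ltn_eqF kn) uv.
Qed.

Definition cat_word a c (u : {ffun 'I_a -> A}) (v : {ffun 'I_c -> A}) :
    {ffun 'I_(a + c) -> A} :=
  [ffun i => match fintype.split i with inl j => u j | inr j => v j end].

Lemma prefixD a c u : prefix (a + c) u = cat_word (prefix a u) (prefix c (shiftn a u)).
Proof. by apply/ffunP => i; rewrite !ffunE; case: splitP => j ->; rewrite ffunE. Qed.

Lemma complexity_split a c (P Q S D : set AN) :
  (forall u, P u -> D u \/ (Q u /\ S (shiftn a u))) ->
  (complexity P (a + c) <= complexity Q a * complexity S c + complexity D (a + c))%N.
Proof.
move=> PD; rewrite /complexity.
have sub : language (a + c) P \subset
    [set cat_word x.1 x.2 | x in finset.setX (language a Q) (language c S)] :|:
    language (a + c) D.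
  apply/fintype.subsetP => w /languageP [u [Pu <-]]; rewrite inE.
  case: (PD u Pu) => [Du|[Qu Su]]; first by rewrite mem_language ?orbT.
  apply/orP; left; rewrite prefixD; apply/imsetP.
  by exists (prefix a u, prefix c (shiftn a u)); rewrite // inE /= !mem_language.
apply: leq_trans (subset_leq_card sub) _; apply: leq_trans (leq_card_setU _ _) _.
by rewrite leq_add2r -cardsX; exact: leq_imset_card.
Qed.

Lemma complexity_submul (P : set AN) a c : shift_invariant P ->
  (complexity P (a + c) <= complexity P a * complexity P c)%N.
Proof.
move=> iP; rewrite -[X in (_ <= X)%N]addn0 -(complexity0 (a + c)).
apply: complexity_split => u Pu; right; split => //; exact: shift_invariant_shiftn.
Qed.

Lemma complexity_determined (D : set AN) N0 :
  (forall u v, D u -> D v -> agree N0 u v -> u = v) ->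
  forall N, (complexity D N <= complexity D N0)%N.
Proof.
move=> detD N; have [[u0 Du0]|/set0P/negP/negPn/eqP ->] := pselect (D !=set0); last first.
  by rewrite complexity0.
pose g (w : {ffun 'I_N0 -> A}) : {ffun 'I_N -> A} :=
  if pselect (exists u, D u /\ prefix N0 u = w) is left H
  then prefix N (proj1_sig (cid H)) else prefix N u0.
have sub : language N D \subset g @: language N0 D.
  apply/fintype.subsetP => w /languageP [u [Du <-]]; apply/imsetP.
  exists (prefix N0 u); first exact: mem_language.
  rewrite /g; case: pselect => [H|[]]; last by exists u.
  case: (cid H) => v [Dv /eq_prefix vu] /=.
  by rewrite (detD _ _ Du Dv (agree_sym vu)).
by apply: leq_trans (subset_leq_card sub) _; exact: leq_imset_card.
Qed.

Definition close_pairs (D : set AN) j (w : AN) := forall N, exists u v,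
  [/\ D u, D v, agree (maxn j N) u v, u <> v & agree j u w].

Lemma close_pairs_agree D j w w' : close_pairs D j w -> agree j w w' -> close_pairs D j w'.
Proof.
move=> Dw ww' N; have [u [v [Du Dv uv neq uw]]] := Dw N.
by exists u, v; split => //; exact: agree_trans ww'.
Qed.

Lemma close_pairsS D j w : close_pairs D j w ->
  exists v, agree j w v /\ close_pairs D j.+1 v.
Proof.
move=> Dw; apply: contrapT => hno.
have hN a : exists N, ~ exists u v, [/\ D u, D v, agree (maxn j.+1 N) u v, u <> v
    & agree j.+1 u (set_at w j a)].
  apply: contrapT => ha; apply: hno; exists (set_at w j a).
  split; first exact: agree_set_at.
  by move=> N; apply: contrapT => hN; apply: ha; exists N.
pose Nf a := proj1_sig (cid (hN a)); pose Nm := (\max_(a : A) Nf a)%N.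
have [u [v [Du Dv uv neq uw]]] := Dw (maxn j.+1 Nm).
apply: (proj2_sig (cid (hN (u j)))); exists u, v; split => //.
  apply: agree_le uv; rewrite maxnA (maxn_idPr (leqnSn j)) geq_max leq_maxl /=.
  exact: leq_trans (leq_bigmax (u j)) (leq_maxr _ _).
by apply: agree_sym; apply: agreeS_set_at; exact: agree_sym.
Qed.

Definition nonderived_part (P : set AN) m : set AN :=
  [set u | P u /\ prefix m u \notin language m (derived P)].

Lemma nonderived_determined (P : set AN) m : seq_closed P -> exists N0, forall u v,
  nonderived_part P m u -> nonderived_part P m v -> agree N0 u v -> u = v.
Proof.
move=> cP; set D := nonderived_part P m; apply: contrapT => hn.
have D_pairs N : exists u v, [/\ D u, D v, agree N u v & u <> v].
  apply: contrapT => hN; apply: hn; exists N => u v Du Dv uv.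
  by apply: contrapT => neq; apply: hN; exists u, v.
have [u0 [_ [_ _ _ _]]] := D_pairs 0%N.
have G0 : close_pairs D 0 u0.
  move=> N; have [u [v [Du Dv uv neq]]] := D_pairs N.
  by exists u, v; split => //; rewrite max0n.
have [w [_ Gw]] := konig (@close_pairs_agree D) (@close_pairsS D) G0.
have Pw : P w.
  apply: cP => n; have [u [v [[Pu _] _ _ _ uw]]] := Gw n isT 0%N.
  by exists u; split => //; exact: agree_sym.
have [u [v [[Pu nu] _ _ _ uw]]] := Gw m isT 0%N.
move/negP: nu; apply; rewrite (proj2 (eq_prefix _ _ _) uw); apply: mem_language.
split => // -[n isn]; have [u' [v' [[Pu' _] [Pv' _] uv' neq uw']]] := Gw n isT 0%N.
rewrite maxn0 in uv'; apply: neq.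
by rewrite (isn u' Pu' (agree_sym uw')) (isn v' Pv' (agree_trans (agree_sym uw') uv')).
Qed.

Lemma complexity_recursion (P : set AN) m : seq_closed P -> shift_invariant P ->
  exists M, forall c,
    (complexity P (m + c) <= complexity (derived P) m * complexity P c + M)%N.
Proof.
move=> cP iP; have [N0 detD] := nonderived_determined m cP.
pose Q : set AN := fun u => prefix m u \in language m (derived P).
exists (complexity (nonderived_part P m) N0) => c.
apply: leq_trans (complexity_split c (Q := Q) (S := P) (D := nonderived_part P m) _) _.
  move=> u Pu; case: (boolP (prefix m u \in language m (derived P))) => Qu; last by left.
  by right; split => //; exact: shift_invariant_shiftn.
apply: leq_add; last exact: complexity_determined.
rewrite leq_mul2r; apply/orP; right; apply: subset_leq_card.
by apply/fintype.subsetP => w /languageP [u [Qu <-]].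
Qed.

Definition meets_all (F : set (set AN)) j (v : AN) :=
  forall Q, F Q -> exists v', Q v' /\ agree j v v'.

Lemma meets_all_agree F j v v' : meets_all F j v -> agree j v v' -> meets_all F j v'.
Proof.
move=> Fv vv' Q FQ; have [w [Qw vw]] := Fv Q FQ.
by exists w; split => //; exact: agree_trans (agree_sym vv') vw.
Qed.

Lemma meets_allS F j v : total_on F subset -> meets_all F j v ->
  exists v1, agree j v v1 /\ meets_all F j.+1 v1.
Proof.
move=> Ftot Fv; apply: contrapT => hno.
have hQ a : exists Q, F Q /\ ~ exists v', Q v' /\ agree j.+1 (set_at v j a) v'.
  apply: contrapT => ha; apply: hno; exists (set_at v j a).
  split; first exact: agree_set_at.
  by move=> Q FQ; apply: contrapT => hv; apply: ha; exists Q.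
pose Qf a := proj1_sig (cid (hQ a)).
have FQf a : F (Qf a) by rewrite /Qf; case: (cid (hQ a)) => ? [].
have [a0 ha0] := total_on_finite_min Ftot FQf (v 0%N).
have [v' [Qv' vv']] := Fv _ (FQf a0).
apply: (proj2 (proj2_sig (cid (hQ (v' j))))); exists v'; split.
  exact: ha0.
exact: agreeS_set_at.
Qed.

Lemma seq_closed_bigcap (F : set (set AN)) :
  (forall Q, F Q -> seq_closed Q) -> seq_closed (\bigcap_(Q in F) Q).
Proof.
move=> Fc u h Q FQ; apply: (Fc Q FQ) => n.
by have [v [Fv uv]] := h n; exists v; split => //; exact: Fv.
Qed.

Lemma shift_invariant_bigcap (F : set (set AN)) :
  (forall Q, F Q -> shift_invariant Q) -> shift_invariant (\bigcap_(Q in F) Q).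
Proof. by move=> Fi u Fu Q FQ; apply: (Fi Q FQ); exact: Fu. Qed.

Lemma language_bigcap_chain (F : set (set AN)) n w :
  total_on F subset -> (forall Q, F Q -> seq_closed Q) -> F !=set0 ->
  (forall Q, F Q -> w \in language n Q) -> w \in language n (\bigcap_(Q in F) Q).
Proof.
move=> Ftot Fc [Q0 FQ0] Fw.
have /languageP [u0 [_ u0w]] := Fw Q0 FQ0.
have G0 : meets_all F n u0.
  move=> Q FQ; have /languageP [v [Qv vw]] := Fw Q FQ.
  by exists v; split => //; apply/eq_prefix; rewrite u0w vw.
have [w' [u0w' Gw']] :=
  konig (@meets_all_agree F) (fun j v => @meets_allS F j v Ftot) G0.
rewrite -u0w (proj2 (eq_prefix _ _ _) u0w'); apply: mem_language => Q FQ.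
apply: (Fc Q FQ) => N; have [v [Qv w'v]] := Gw' (N + n)%N (leq_addl _ _) Q FQ.
by exists v; split => //; apply: agree_le w'v; exact: leq_addr.
Qed.

Section Growth.
Variable R : realType.
Local Open Scope ring_scope.

Definition exp_growth (b : R) (P : set AN) := forall n, b ^+ n <= (complexity P n)%:R.

Lemma exp_growth_derived b P : 1 < b -> seq_closed P -> shift_invariant P ->
  exp_growth b P -> exp_growth b (derived P).
Proof.
move=> b1 cP iP gP; apply: contrapT => /existsNP [m0 /negP]; rewrite -ltNge => hm0.
have [m [m_gt0 hm]] : exists m, (0 < m)%N /\ (complexity (derived P) m)%:R < b ^+ m.
  case: (posnP m0) => [m00|]; last by exists m0.
  move: hm0; rewrite m00 expr0 ltrn1 ltnS leqn0 => /eqP c0.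
  exists 1%N; split => //; have := complexity_submul 0 1 (shift_invariant_derived iP).
  by rewrite c0 mul0n leqn0 => /eqP ->; rewrite expr1 (lt_trans ltr01 b1).
have [M rec] := complexity_recursion m cP iP.
have [n hn] := recursion_below_geometric b1 m_gt0 hm rec.
by move: (gP n); rewrite leNgt hn.
Qed.

Lemma exp_growth_bigcap_chain b (F : set (set AN)) :
  total_on F subset -> F !=set0 -> (forall Q, F Q -> seq_closed Q /\ exp_growth b Q) ->
  exp_growth b (\bigcap_(Q in F) Q).
Proof.
move=> Ftot [Q1 FQ1] Fg n.
pose small k := `[< exists Q, F Q /\ complexity Q n = k >].
have [k /asboolP [Q0 [FQ0 <-]] kmin] : {k | small k & forall k', small k' -> (k <= k')%N}.
  by apply: find_ex_minn; exists (complexity Q1 n); apply/asboolP; exists Q1.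
have sub Q : F Q -> language n Q0 \subset language n Q.
  move=> FQ; have [Q0Q|QQ0] := Ftot _ _ FQ0 FQ; first exact: languageS.
  suff -> : language n Q = language n Q0 by [].
  apply/eqP; rewrite eqEcard languageS //=.
  by apply: kmin; apply/asboolP; exists Q.
apply: le_trans (proj2 (Fg _ FQ0) n) _; rewrite ler_nat; apply: subset_leq_card.
apply/fintype.subsetP => w w0; apply: language_bigcap_chain => //.
- by move=> Q FQ; exact: (Fg Q FQ).1.
- by exists Q1.
- by move=> Q FQ; apply: (fintype.subsetP (sub Q FQ)).
Qed.

Theorem scattered_not_exp_growth b (Om : set AN) : 1 < b -> seq_closed Om ->
  shift_invariant Om -> scattered Om -> ~ exp_growth b Om.
Proof.
move=> b1 cOm iOm scOm gOm.
pose candidate (Q : set AN) :=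
  Q `<=` Om /\ [/\ seq_closed Q, shift_invariant Q & exp_growth b Q].
pose below (t s : {Q | candidate Q}) := `[< sval s `<=` sval t >].
have [[Q [QOm [cQ iQ gQ]]] Qmin] : exists t, forall s, below t s -> s = t.
  apply: (@Zorn _ below).
  - by move=> t; apply/asboolP.
  - by move=> r s t /asboolP sr /asboolP ts; apply/asboolP; exact: subset_trans ts sr.
  - by move=> [s ps] [t pt] /asboolP ts /asboolP st; apply: eq_exist; apply/seteqP.
  move=> C Ctot; have [[t0 Ct0]|C0] := pselect (C !=set0); last first.
    exists (exist candidate Om (conj (@subset_refl _ Om) (And3 cOm iOm gOm))) => s Cs.
    by case: C0; exists s.
  pose F := sval @` C.
  have Ftot : total_on F subset.
    by move=> _ _ [s Cs <-] [t Ct <-]; case: (Ctot s t Cs Ct) => /asboolP; [right|left].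
  have Fcandidate Q : F Q -> candidate Q by case=> s _ <-; exact: svalP.
  have candidateF : candidate (\bigcap_(Q in F) Q).
    have Ft0 : F (sval t0) by exists t0.
    split; first by move=> x /(_ _ Ft0) /(Fcandidate _ Ft0).1.
    split; [apply: seq_closed_bigcap | apply: shift_invariant_bigcap |
      apply: exp_growth_bigcap_chain => //; first by exists (sval t0)];
    by move=> Q /Fcandidate [_ []].
  by exists (exist candidate _ candidateF) => s Cs; apply/asboolP => x /(_ _ (imageP sval Cs)).
have candidateD : candidate (derived Q).
  split; first exact: subset_trans (@derived_sub Q) QOm.
  by split; [exact: seq_closed_derived | exact: shift_invariant_derived |
    exact: exp_growth_derived].
have /(congr1 sval) /= DQ := Qmin (exist candidate _ candidateD) (asboolT (@derived_sub Q)).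
have [u [Qu uiso]] : exists u, Q u /\ isolated Q u.
  apply: scOm => //; apply: (@complexity_gt0 _ 0%N).
  by rewrite -(ler_nat R) -[X in X <= _](expr0 b); exact: gQ.
by move: Qu; rewrite -DQ => -[].
Qed.

Lemma complexity_mul_le (P : set AN) a q : shift_invariant P ->
  (complexity P (q * a) <= complexity P a ^ q)%N.
Proof.
move=> iP; elim: q => [|q IH].
  by rewrite mul0n expn0 /complexity (leq_trans (max_card _)) // card_ffun card_ord.
by rewrite mulSn expnS (leq_trans (complexity_submul _ _ iP)) // leq_mul.
Qed.

Lemma complexity_le_geometric b (P : set AN) : 1 < b -> shift_invariant P ->
  ~ exp_growth b P -> exists C : R, 0 < C /\ forall n, (complexity P n)%:R <= C * b ^+ n.
Proof.
move=> b1 iP /existsNP [n0 /negP]; rewrite -ltNge => hn0.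
have b0 : 0 <= b by rewrite ltW // (lt_trans ltr01 b1).
pose C : R := 1 + \sum_(r < n0) (complexity P r)%:R.
have C1 : 1 <= C by rewrite lerDl sumr_ge0.
have C0 : 0 < C by exact: lt_le_trans ltr01 C1.
exists C; split => // n; case: (posnP n0) => [n00|n0_gt0].
  move: hn0; rewrite n00 expr0 ltrn1 ltnS leqn0 => /eqP c0.
  have := complexity_submul 0 n iP; rewrite c0 mul0n leqn0 => /eqP ->.
  by rewrite mulr_ge0 ?exprn_ge0 // ltW.
rewrite (divn_eq n n0); set q := (n %/ n0)%N; set r := (n %% n0)%N.
have r_lt : (r < n0)%N by rewrite ltn_mod.
have hr : (complexity P r)%:R <= C.
  rewrite /C (bigD1 (Ordinal r_lt)) //= addrCA lerDl addr_ge0 // sumr_ge0 //.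
apply: (le_trans (y := ((complexity P n0 ^ q * complexity P r)%N)%:R)).
  rewrite ler_nat (leq_trans (complexity_submul _ _ iP)) // leq_mul2r.
  by rewrite complexity_mul_le ?orbT.
rewrite natrM natrX; apply: (le_trans (y := b ^+ (q * n0) * C)).
  apply: ler_pM => //; rewrite mulnC exprM.
  by apply: lerXn2r; rewrite ?nnegrE ?exprn_ge0 // ltW.
by rewrite mulrC exprD mulrA ler_peMr ?mulr_ge0 ?exprn_ge0 ?exprn_ege1 // ltW.
Qed.
End Growth.
End Subshifts.

Lemma noetherian_minimal (X : topologicalType) (K : set (set X)) : noetherian X ->
  (forall C, K C -> closed C) -> K !=set0 ->
  exists C, K C /\ forall C', K C' -> C' `<=` C -> C' = C.
Proof.
move=> hnoeth Kc [C0 KC0]; apply: contrapT => hno.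
have hnext C : K C -> exists C', K C' /\ C' `<=` C /\ C' <> C.
  move=> KC; apply: contrapT => h; apply: hno; exists C; split => // C' KC' C'C.
  by apply: contrapT => ne; apply: h; exists C'.
pose next C := if pselect (exists C', K C' /\ C' `<=` C /\ C' <> C) is left H
  then proj1_sig (cid H) else C.
pose Fs := fix Fs n := if n is n'.+1 then next (Fs n') else C0.
have Fs_next n : K (Fs n) -> K (Fs n.+1) /\ Fs n.+1 `<=` Fs n /\ Fs n.+1 <> Fs n.
  move=> KF; rewrite /= /next; case: pselect => [H|[]]; last exact: hnext.
  exact: proj2_sig (cid H).
have KF n : K (Fs n) by elim: n => [//|n IH]; exact: (Fs_next n IH).1.
have [m hm] := hnoeth _ (fun n => Kc _ (KF n)) (fun n => (Fs_next n (KF n)).2.1).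
by apply: (Fs_next m (KF m)).2.2; apply: hm.
Qed.

Definition locally_closed (X : topologicalType) (C : set X) :=
  exists O F, [/\ open O, closed F & C = O `&` F].

Section LocallyClosed.
Variable X : topologicalType.

Lemma locally_closedT : locally_closed [set: X].
Proof. by exists setT, setT; rewrite setIT; split; [exact: openT | exact: closedT |]. Qed.

Lemma locally_closedI (C D : set X) :
  locally_closed C -> locally_closed D -> locally_closed (C `&` D).
Proof.
move=> [V1 [F1 [V1o F1c ->]]] [V2 [F2 [V2o F2c ->]]].
by exists (V1 `&` V2), (F1 `&` F2); rewrite setIACA; split; [exact: openI | exact: closedI |].
Qed.

Lemma locally_closed_open (O : set X) : open O -> locally_closed O.
Proof. by exists O, setT; rewrite setIT; split => //; exact: closedT. Qed.

Lemma locally_closed_closed (F : set X) : closed F -> locally_closed F.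
Proof. by exists setT, F; rewrite setTI; split => //; exact: openT. Qed.

Lemma locally_closed_preimage (Y : topologicalType) (g : Y -> X) (C : set X) :
  continuous g -> locally_closed C -> locally_closed (g @^-1` C).
Proof.
move=> cg [V [F [Vo Fc ->]]]; exists (g @^-1` V), (g @^-1` F).
by rewrite preimage_setI; split; [move/continuousP: cg; apply |
  move/continuous_closedP: cg; apply |].
Qed.

Lemma locally_closed_closure_meet (C D : set X) : locally_closed C -> C !=set0 ->
  closure C = closure D -> C `&` D !=set0.
Proof.
move=> [V [F [Vo Fc eC]]] [x Cx] CD.
have Vx : V x by move: Cx; rewrite eC => -[].
have xD : closure D x by rewrite -CD; exact: subset_closure.
have [y [Dy Vy]] := xD V (open_nbhs_nbhs (conj Vo Vx)).
exists y; split => //; rewrite eC; split => //.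
have CF : C `<=` F by rewrite eC => z [].
have yC : closure C y by rewrite CD; exact: subset_closure.
by move/closure_id: Fc => ->; exact: closureS CF _ yC.
Qed.

End LocallyClosed.

Lemma continuous_iter (X : topologicalType) (f : X -> X) k :
  continuous f -> continuous (iter k f).
Proof.
move=> hf; elim: k => [|k IH] /= x; first exact: cvg_id.
exact: continuous_comp (IH x) (hf _).
Qed.

Lemma bigminn_le (I : finType) (P : pred I) (F : I -> nat) x0 i0 :
  P i0 -> (\big[minn/x0]_(i | P i) F i <= F i0)%N.
Proof.
move=> Pi0; rewrite -big_filter.
have : i0 \in [seq i <- index_enum I | P i] by rewrite mem_filter Pi0 mem_index_enum.
elim: [seq i <- _ | _] => [//|j r IH]; rewrite inE big_cons => /orP[/eqP <-|/IH].
  exact: geq_minl.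
exact: leq_trans (geq_minr _ _).
Qed.

Lemma Ncov_le_card (T : Type) (V : seq (set T)) (S : {set 'I_(size V)}) :
  \bigcup_(i in [set i | i \in S]) nth set0 V i = [set: T] -> (Ncov V <= #|S|)%N.
Proof. by move=> SV; apply: bigminn_le; apply/asboolP. Qed.

Lemma nth_cover_join (X : Type) (P Q : seq (set X)) i j :
  (i < size P)%N -> (j < size Q)%N ->
  nth set0 (cover_join P Q) (i * size Q + j) = nth set0 P i `&` nth set0 Q j.
Proof.
rewrite /cover_join; elim: P i => [//|a P IH] [|i] iP jQ.
  by rewrite mul0n add0n allpairs_cons nth_cat size_map jQ (nth_map set0).
rewrite allpairs_cons nth_cat size_map mulSn -addnA ltnNge leq_addr /= addKn.
exact: IH.
Qed.

Section Itineraries.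
Variables (X : topologicalType) (f : X -> X) (U : seq (set X)).
Hypotheses (hf : continuous f) (hU : finite_open_cover U).

Local Notation m := (size U).

Definition address (y : X) : {set 'I_m} := [set i : 'I_m | `[< nth set0 U i y >]].
Definition itinerary x : nat -> {set 'I_m} := fun k => address (iter k f x).
Definition itineraries : set (nat -> {set 'I_m}) :=
  [set u | forall n, exists x, agree n u (itinerary x)].

Lemma itinerary_in x : itineraries (itinerary x).
Proof. by move=> n; exists x. Qed.

Lemma seq_closed_itineraries : seq_closed itineraries.
Proof.
move=> u h n; have [v [Ov uv]] := h n; have [x vx] := Ov n.
by exists x; exact: agree_trans uv vx.
Qed.

Lemma shift_invariant_itineraries : shift_invariant itineraries.
Proof.
move=> u Ou n; have [x ux] := Ou n.+1; exists (f x) => k kn.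
by rewrite /itinerary -iterSr; apply: ux.
Qed.

Lemma locally_closed_address_fiber (T : {set 'I_m}) :
  locally_closed [set y | address y = T].
Proof.
pose F i : set X := if i \in T then nth set0 U i else ~` nth set0 U i.
have -> : [set y | address y = T] = \big[setI/setT]_(i <- enum 'I_m) F i.
  rewrite -bigcap_seq; apply/seteqP; split => y.
    by move=> /= yT i _; rewrite /F -yT inE; case: asboolP.
  move=> Fy; apply/setP => i; rewrite inE; have := Fy i (mem_enum _ i).
  by rewrite /F; case: (i \in T); case: asboolP.
apply: big_ind => [||i _]; [exact: locally_closedT | exact: locally_closedI |].
rewrite /F; case: (i \in T); [apply: locally_closed_open | apply: locally_closed_closed].
  exact: hU.1.
exact/open_closedC/hU.1.
Qed.

Definition cylinder n u := [set x | agree n u (itinerary x)].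

Lemma cylinderS n u :
  cylinder n.+1 u = cylinder n u `&` iter n f @^-1` [set y | address y = u n].
Proof.
apply/seteqP; split => x.
  by move=> h; split; [move=> k kn; apply: h; exact: ltnW | exact/esym/h].
move=> [h1 h2] k; rewrite ltnS leq_eqVlt => /orP[/eqP ->|kn]; last exact: h1.
by rewrite /itinerary h2.
Qed.

Lemma locally_closed_cylinder n u : locally_closed (cylinder n u).
Proof.
elim: n => [|n IH].
  have -> : cylinder 0 u = setT by apply/seteqP; split => // x _ k; rewrite ltn0.
  exact: locally_closedT.
rewrite cylinderS; apply: locally_closedI => //.
exact/locally_closed_preimage/locally_closed_address_fiber/continuous_iter.
Qed.

Lemma cylinder_agree n u v : agree n u v -> cylinder n u = cylinder n v.
Proof.
move=> uv; apply/seteqP; split => x h; first exact: agree_trans (agree_sym uv) h.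
exact: agree_trans uv h.
Qed.

Lemma cylinder_le n n' u : (n <= n')%N -> cylinder n' u `<=` cylinder n u.
Proof. by move=> le x h; exact: agree_le le h. Qed.

Definition cover_from s L := foldr (@cover_join X) [:: [set: X]]
  [seq cover_preimage (iter k f) U | k <- iota s L].

Lemma cover_fromS s L :
  cover_from s L.+1 = cover_join (cover_preimage (iter s f) U) (cover_from s.+1 L).
Proof. by []. Qed.

Lemma size_cover_from s L : size (cover_from s L) = (m ^ L)%N.
Proof.
elim: L s => [//|L IH] s; rewrite cover_fromS /cover_join size_allpairs IH.
by rewrite /cover_preimage size_map expnS.
Qed.

(* Position, in [cover_from s L], of the member whose [k]-th factor is the
   preimage of [nth set0 U (c k)]: the digits [c s, ..., c (s + L - 1)] in base [m]. *)
Fixpoint cover_index s L (c : nat -> nat) : nat :=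
  if L is L'.+1 then (c s * m ^ L' + cover_index s.+1 L' c)%N else 0%N.

Lemma cover_index_lt s L c : (forall k, (s <= k < s + L)%N -> c k < m)%N ->
  (cover_index s L c < m ^ L)%N.
Proof.
elim: L s => [//|L IH] s hc /=.
have cs : (c s < m)%N by apply: hc; rewrite leqnn addnS ltnS leq_addr.
apply: (@leq_trans (c s * m ^ L + m ^ L)%N).
  by rewrite ltn_add2l IH // => k /andP[sk ks]; apply: hc; rewrite ltnW // -addSnnS.
by rewrite -mulSnr expnS leq_mul2r cs orbT.
Qed.

Lemma mem_cover_from s L c x : (forall k, (s <= k < s + L)%N ->
    (c k < m)%N /\ nth set0 U (c k) (iter k f x)) ->
  nth set0 (cover_from s L) (cover_index s L c) x.
Proof.
elim: L s => [//|L IH] s hc /=.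
have hcS k : (s.+1 <= k < s.+1 + L)%N -> (c k < m)%N /\ nth set0 U (c k) (iter k f x).
  by move=> /andP[sk ks]; apply: hc; rewrite ltnW // -addSnnS.
have /hc [cs Ucs] : (s <= s < s + L.+1)%N by rewrite leqnn addnS ltnS leq_addr.
rewrite cover_fromS -(size_cover_from s.+1 L) nth_cover_join ?size_map //; last first.
  by rewrite size_cover_from cover_index_lt // => k /hcS [].
by split; [rewrite /cover_preimage (nth_map set0) | exact: IH].
Qed.

Definition pick_member (T : {set 'I_m}) : nat :=
  if [pick i in T] is Some i then val i else 0%N.

Lemma pick_member_address y :
  (pick_member (address y) < m)%N /\ nth set0 U (pick_member (address y)) y.
Proof.
rewrite /pick_member; case: pickP => [i|none].
  by rewrite inE => /asboolP Uiy; split => //; exact: ltn_ord.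
have : [set: X] y by [].
rewrite -hU.2 => -[i /= im Uiy]; have := none (Ordinal im).
by rewrite inE; case: asboolP.
Qed.

Definition letter n (w : {ffun 'I_n -> {set 'I_m}}) k := oapp w finset.set0 (insub k).

Definition word_index n (w : {ffun 'I_n -> {set 'I_m}}) :=
  cover_index 0 n (fun k => pick_member (letter w k)).

Lemma word_index_itinerary n x (i := word_index (prefix n (itinerary x))) :
  (i < size (cover_n f U n))%N /\ nth set0 (cover_n f U n) i x.
Proof.
pose c k := pick_member (letter (prefix n (itinerary x)) k).
have hc k : (0 <= k < 0 + n)%N -> (c k < m)%N /\ nth set0 U (c k) (iter k f x).
  by move=> kn; rewrite /c /letter insubT //= ffunE; exact: pick_member_address.
rewrite -/(cover_from 0 n) size_cover_from; split.
  by apply: (@cover_index_lt _ _ c) => k /hc [].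
exact: (@mem_cover_from _ _ c).
Qed.

Lemma Ncov_le_complexity n : (Ncov (cover_n f U n) <= complexity itineraries n)%N.
Proof.
set ws := [seq word_index w | w <- enum (language n itineraries)].
pose S : {set 'I_(size (cover_n f U n))} := finset (fun i => val i \in ws).
apply: (@leq_trans #|S|).
  apply: Ncov_le_card; apply/seteqP; split => // x _.
  have [lt mem] := word_index_itinerary n x.
  exists (Ordinal lt) => //=; rewrite !inE; apply/mapP.
  by exists (prefix n (itinerary x)); rewrite // mem_enum mem_language //; exact: itinerary_in.
rewrite /complexity !cardE -(size_map val) -(size_map (@word_index n)).
apply: uniq_leq_size; first by rewrite map_inj_uniq ?enum_uniq //; exact: val_inj.
by move=> j /mapP [i]; rewrite mem_enum inE => iS ->.
Qed.

Definition cylinder_core u := [set x | forall n, closure (cylinder n u) x].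

Section Noetherian.
Hypothesis hnoeth : noetherian X.

Lemma closure_cylinder_stable u :
  exists n0, forall n, (n0 <= n)%N -> cylinder_core u = closure (cylinder n u).
Proof.
have [n0 hn0] := hnoeth (fun n => @closed_closure _ (cylinder n u))
  (fun n => closureS (cylinder_le (leqnSn n))).
exists n0 => N n0N; apply/seteqP; split => [x|x xN n]; first exact.
have [le|lt] := leqP n n0; last by rewrite (hn0 n (ltnW lt)) -(hn0 N n0N).
by rewrite (hn0 N n0N) in xN; exact: closureS (cylinder_le le) _ xN.
Qed.

Lemma scattered_itineraries : scattered itineraries.
Proof.
move=> Q QO [u0 Qu0].
pose cores := [set C | exists u, Q u /\ C = cylinder_core u].
have [_ [[u [Qu ->]] core_min]] : exists C, cores C /\
    forall C', cores C' -> C' `<=` C -> C' = C.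
  apply: noetherian_minimal => //; last by exists (cylinder_core u0), u0.
  move=> _ [v [_ ->]]; have [n0 hn0] := closure_cylinder_stable v.
  by rewrite (hn0 n0 (leqnn n0)); exact: closed_closure.
exists u; split => //; have [n0 hn0] := closure_cylinder_stable u.
exists n0 => v Qv uv; have [n1 hn1] := closure_cylinder_stable v.
have core_vu : cylinder_core v = cylinder_core u.
  apply: core_min; first by exists v.
  by rewrite (hn0 n0) // (cylinder_agree uv) => x; apply.
apply: funext => k; pose N := maxn (maxn n0 n1) k.+1.
have closure_uv : closure (cylinder N u) = closure (cylinder N v).
  by rewrite -hn0 -?hn1 ?core_vu // /N !leq_max leqnn ?orbT.
have [x [xu xv]] := locally_closed_closure_meet (locally_closed_cylinder N u)
  (QO u Qu N) closure_uv.
have kN : (k < N)%N by rewrite /N leq_max leqnn orbT.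
by rewrite (xu k kN) (xv k kN).
Qed.
End Noetherian.
End Itineraries.

Local Open Scope ring_scope.

Lemma Ncov_cover_n_le_geometric (R : realType) (X : topologicalType) (f : X -> X)
    (U : seq (set X)) (b : R) :
  noetherian X -> continuous f -> finite_open_cover U -> 1 < b ->
  exists C : R, 0 < C /\ forall n, (Ncov (cover_n f U n))%:R <= C * b ^+ n.
Proof.
move=> hnoeth hf hU b1; have inv := @shift_invariant_itineraries X f U.
have := scattered_not_exp_growth b1 (@seq_closed_itineraries X f U) inv
  (scattered_itineraries hf hU hnoeth).
move=> /(complexity_le_geometric b1 inv) [C [C0 hC]].
exists C; split => // n; apply: le_trans (hC n); rewrite ler_nat.
exact: Ncov_le_complexity.
Qed.

Lemma ln_div_cvg0 (R : realType) (a : nat -> nat) :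
  (forall b : R, 1 < b -> exists C : R, 0 < C /\ forall n, (a n)%:R <= C * b ^+ n) ->
  (fun n => ln (a n)%:R / n%:R) @ \oo --> (0 : R).
Proof.
move=> subexp; apply/cvgrPdist_le => e e0.
have e20 : 0 < e / 2 by rewrite divr_gt0.
have b1 : 1 < expR (e / 2) by rewrite expR_gt1.
have [C [C0 hC]] := subexp _ b1.
pose C1 := C + 1; have C1_ge1 : 1 <= C1 by rewrite lerDr ltW.
have C1_gt0 : 0 < C1 by exact: lt_le_trans ltr01 C1_ge1.
have ln_a n : ln (a n)%:R <= ln C1 + e / 2 * n%:R :> R.
  have [->|a_gt0] := posnP (a n).
    by rewrite ln0 // addr_ge0 ?ln_ge0 // mulr_ge0 // ltW.
  rewrite -[e / 2 * _]expRK -lnM ?posrE ?expR_gt0 // ler_ln ?posrE ?ltr0n //; last first.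
    by rewrite mulr_gt0 ?expR_gt0.
  by apply: le_trans (hC n) _; rewrite expRM_natr ler_wpM2r ?lerDl.
near=> n.
have n0 : 0 < n%:R :> R by rewrite ltr0n; near: n; exact: nbhs_infty_gt.
have nb : 2 * ln C1 / e <= n%:R :> R by near: n; exact: nbhs_infty_ger.
have ln_a_ge0 : 0 <= ln (a n)%:R :> R.
  by have [->|a_gt0] := posnP (a n); [rewrite ln0 | apply: ln_ge0; rewrite ler1n].
rewrite sub0r normrN ger0_norm ?divr_ge0 ?ler0n // ler_pdivrMr //.
apply: le_trans (ln_a n) _; move: nb; rewrite ler_pdivrMr // => nb; nra.
Unshelve. all: end_near.
Qed.

Lemma finite_open_cover_setT (X : topologicalType) : finite_open_cover [:: [set: X]].
Proof.
split; first by case=> [_|//]; exact: openT.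
by apply/seteqP; split => // x _; exists 0%N.
Qed.

Theorem theorem3p1 (R : realType) (X : topologicalType) (f : X -> X)
  (hqc : quasi_compact X) (hnoeth : noetherian X) (hf : continuous f) :
  (forall U : seq (set X), finite_open_cover U ->
     forall eps : R, 0 < eps ->
       exists C : R, 0 < C /\
         forall n : nat, (Ncov (cover_n f U n))%:R <= C * (1 + eps) ^+ n)
  /\ htop R f = (0 : R)%:E.
Proof.
have growth U : finite_open_cover U -> forall b : R, 1 < b ->
    exists C : R, 0 < C /\ forall n, (Ncov (cover_n f U n))%:R <= C * b ^+ n.
  by move=> hU b b1; exact: Ncov_cover_n_le_geometric.
split=> [U hU eps eps0|]; first by apply: (growth U hU); rewrite ltrDl.
have rate U : finite_open_cover U ->
    limn (fun n => ((ln (Ncov (cover_n f U n))%:R : R) / n%:R)%:E) = 0%:E.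
  move=> hU; have rate0 := ln_div_cvg0 (growth U hU).
  by rewrite -(cvg_lim _ rate0) // -EFin_lim //; exact: cvgP rate0.
rewrite /htop; have -> : [set limn (fun n => ((ln (Ncov (cover_n f U n))%:R : R)
    / n%:R)%:E) | U in [set U | finite_open_cover U]] = [set 0%:E].
  apply/seteqP; split => [_ [U hU <-]|_ ->] /=; first exact: (rate U hU).
  by have hT := finite_open_cover_setT X; exists [:: [set: X]] => //; exact: rate.
exact: ereal_sup1.
Qed.
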